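(* For all integers $k\geq 5$ and $n\geq 2$, $$Q(n,k)\leq 2^{c_k(k-2)^n},\qquad\text{where } c_k=\frac{\log_2 k!}{k-2}+\frac{k}{k-4}.$$
   Context: An $n$-ary quasigroup of order $k$ is a function $f:\Sigma^n\to\Sigma$, where $\Sigma=\{0,1,\dots,k-1\}$, such that fixing any $n-1$ of its arguments to arbitrary values of $\Sigma$ yields a bijection $\Sigma\to\Sigma$ in the remaining argument. $Q(n,k)$ denotes the number of distinct $n$-ary quasigroups of order $k$ on the fixed set $\Sigma=\{0,1,\dots,k-1\}$. *)

From mathcomp Require Import all_boot.
From Stdlib Require Import Reals.
Set Implicit Arguments. Unset Strict Implicit. Unset Printing Implicit Defensive.

(* Sigma = 'I_k = {0,...,k-1}; an argument vector in Sigma^n is a finite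
   function 'I_n -> 'I_k. *)
Definition arg (n k : nat) := {ffun 'I_n -> 'I_k}.

Definition upd (n k : nat) (x : arg n k) (i : 'I_n) (a : 'I_k) : arg n k :=
  [ffun j => if j == i then a else x j].

Definition bijectiveb (k : nat) (g : 'I_k -> 'I_k) : bool :=
  injectiveb g && [forall y : 'I_k, exists a : 'I_k, g a == y].

Definition is_quasigroup (n k : nat) (f : {ffun arg n k -> 'I_k}) : bool :=
  [forall i : 'I_n, forall x : arg n k, bijectiveb (fun a => f (upd x i a))].

Definition Q (n k : nat) : nat :=
  #|[set f : {ffun arg n k -> 'I_k} | is_quasigroup f]|.

Local Open Scope R_scope.

Definition log2 (x : R) : R := ln x / ln 2.

Definition c_const (k : nat) : R :=
  log2 (INR (k`!)) / (INR k - 2) + INR k / (INR k - 4).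

(* The layers x |-> f (x, b) of an (m+1)-ary quasigroup f of order k are m-ary quasigroups.
   Fix the first k-2 layers, in at most Q(m,k)^(k-2) ways.  At each point the last two layers
   then take the two remaining values in some order; comparing with one such f0, whose last two
   layers are g0 and h0, the set of points where the layer k-2 of f equals h0 determines f and is
   closed under the switching edges y -- y' with h0 y = g0 y'.  These switching-closed sets form
   a family closed under difference whose nonempty members contain a combinatorial cube of 2^m
   points, and such a family has at most 2^(k^m / 2^m) members.  Hence
   log2 Q(m+1,k) <= (k-2) log2 Q(m,k) + (k/2)^m, and solving this recurrence from Q(1,k) <= k!
   gives the bound. *)

From Stdlib Require Import Reals Lra.
From mathcomp Require Import all_boot zify.
Set Implicit Arguments. Unset Strict Implicit. Unset Printing Implicit Defensive.

Lemma upd_id n k (y : arg n k) i : upd y i (y i) = y.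
Proof. by apply/ffunP => j; rewrite ffunE; case: eqP => // ->. Qed.

Lemma upd_eq n k (y : arg n k) i a : upd y i a i = a.
Proof. by rewrite ffunE eqxx. Qed.

Lemma upd_neq n k (y : arg n k) i j a : j != i -> upd y i a j = y j.
Proof. by rewrite ffunE => /negbTE ->. Qed.

Lemma quasigroup_line_inj n k (f : {ffun arg n k -> 'I_k}) i x a b :
  is_quasigroup f -> f (upd x i a) = f (upd x i b) -> a = b.
Proof. by move=> /forallP/(_ i)/forallP/(_ x)/andP[/injectiveP + _]; apply. Qed.

Lemma quasigroup_line_surj n k (f : {ffun arg n k -> 'I_k}) i x v :
  is_quasigroup f -> exists a, f (upd x i a) = v.
Proof.
by move=> /forallP/(_ i)/forallP/(_ x)/andP[_ /forallP/(_ v)/existsP[a /eqP]]; exists a.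
Qed.

Lemma leq_exp2rW m n e : m <= n -> m ^ e <= n ^ e.
Proof. by case: e => [|e] //= h; rewrite leq_exp2r. Qed.

Lemma diff_closed_atom (X : finType) (F : {set {set X}}) (A S : {set X}) :
  (forall S T, S \in F -> T \in F -> S :\: T \in F) ->
  A \in F -> (forall B, B \in F -> B != set0 -> #|A| <= #|B|) ->
  S \in F -> S :&: A = if A \subset S then A else set0.
Proof.
move=> hD FA Amin FS; have FSA : S :&: A \in F.
  by rewrite -[S :&: A]set0U -(setDv S) -setDDr; apply/hD/hD.
case: ifPn => [/setIidPr //|AS]; apply/eqP; apply: contraNT AS => SAn0.
have /eqP <- : S :&: A == A by rewrite eqEcard subsetIr Amin.
exact: subsetIl.
Qed.

(* A minimal nonempty member A is an atom of the family, so discarding A at most halves the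
   family while U loses at least s points. *)
Lemma diff_closed_family_card (X : finType) (s : nat) (U : {set X}) (F : {set {set X}}) :
  (forall S T, S \in F -> T \in F -> S :\: T \in F) ->
  (forall S, S \in F -> S != set0 -> s <= #|S|) ->
  F \subset powerset U -> #|F| ^ s <= 2 ^ #|U|.
Proof.
have [N] := ubnP #|U|; elim: N U F => // N IH U F ltUN hD hs FU.
have [F0 | [A0 A0F]] := set_0Vmem (F :\ set0).
  apply: (@leq_trans (1 ^ s)); last by rewrite exp1n expn_gt0.
  apply: leq_exp2rW; rewrite -(cards1 (@set0 X)); apply: subset_leq_card.
  apply/subsetP => S FS; apply/set1P/eqP; apply: contra_eqT F0 => Sn0.
  by apply/set0Pn; exists S; rewrite !inE Sn0.
have [A /setD1P [An0 FA] Amin] := arg_minnP (fun B : {set X} => #|B|) A0F.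
have {}Amin (B : {set X}) : B \in F -> B != set0 -> #|A| <= #|B|.
  by move=> FB Bn0; apply: Amin; apply/setD1P.
have AU : A \subset U by move/subsetP/(_ A FA): FU; rewrite inE.
set F' := [set S in F | S \subset U :\: A].
have card_F : #|F| <= #|F'| * 2.
  rewrite -[2]card_bool -cardsT -cardsX.
  rewrite -(@card_in_imset _ _ (fun S => (S :\: A, A \subset S)) F).
    apply/subset_leq_card/subsetP => _ /imsetP [S FS ->]; rewrite !inE hD //=.
    by rewrite andbT setSD //; move/subsetP/(_ S FS): FU; rewrite inE.
  move=> S T FS FT [eD eA].
  by rewrite -(setID S A) -(setID T A) eD !(diff_closed_atom hD FA Amin) // eA.
have ltUAN : #|U :\: A| < N.
  rewrite cardsD (setIidPr AU) -ltnS; apply: leq_trans ltUN; rewrite ltnS.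
  have := subset_leq_card AU; have : 0 < #|A| by rewrite card_gt0.
  lia.
have card_F' : #|F'| ^ s <= 2 ^ #|U :\: A|.
  apply: IH => //.
  - move=> S T; rewrite !inE => /andP [FS SUA] /andP [FT _].
    by rewrite hD // (subset_trans (subsetDl S T)).
  - by move=> S /setIdP [FS _]; apply: hs.
  - by apply/subsetP => S; rewrite !inE => /andP [].
apply: leq_trans (leq_exp2rW s card_F) _; rewrite expnMn -(subnK (subset_leq_card AU)) expnD.
rewrite cardsD (setIidPr AU) in card_F'.
by apply: leq_mul card_F' _; rewrite leq_exp2l // hs.
Qed.

Definition neighbour_closed m k (J : {set 'I_m}) (S : {set arg m k}) :=
  forall y i, y \in S -> i \in J -> exists2 a, a != y i & upd y i a \in S.

Lemma neighbour_closed_card m k (J : {set 'I_m}) (S : {set arg m k}) :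
  S != set0 -> neighbour_closed J S -> 2 ^ #|J| <= #|S|.
Proof.
have [N] := ubnP #|J|; elim: N J S => // N IH J S ltJN Sn0 hS.
have [-> | [i iJ]] := set_0Vmem J; first by rewrite cards0 card_gt0.
have [y0 y0S] := set0Pn _ Sn0.
set C := [set y : arg m k | y i == y0 i].
have ltJiN : #|J :\ i| < N by move: ltJN; rewrite (cardsD1 i J) iJ.
have half_closed (T : {set arg m k}) :
    (forall y j a, j != i -> (y \in T) = (upd y j a \in T)) ->
    neighbour_closed (J :\ i) (S :&: T).
  move=> hT y j; rewrite !inE => /andP [yS yT] /andP [ji jJ].
  by have [a ay ya] := hS y j yS jJ; exists a; rewrite // inE ya -hT.
have C_card : 2 ^ #|J :\ i| <= #|S :&: C|.
  apply: IH => //; first by apply/set0Pn; exists y0; rewrite !inE y0S eqxx.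
  by apply: half_closed => y j a ji; rewrite !inE upd_neq // eq_sym.
have notC_card : 2 ^ #|J :\ i| <= #|S :&: ~: C|.
  apply: IH => //.
    have [a ay ya] := hS y0 i y0S iJ.
    by apply/set0Pn; exists (upd y0 i a); rewrite !inE ya upd_eq.
  by apply: half_closed => y j a ji; rewrite !inE upd_neq // eq_sym.
rewrite -(cardsID C S) -setDE in notC_card *.
by rewrite (cardsD1 i J) iJ expnS mul2n -addnn leq_add.
Qed.

Definition rcons_arg m k (y : arg m k) (b : 'I_k) : arg m.+1 k :=
  [ffun j => if unlift ord_max j is Some j' then y j' else b].

Definition layer m k (f : {ffun arg m.+1 k -> 'I_k}) (b : 'I_k) : {ffun arg m k -> 'I_k} :=
  [ffun y => f (rcons_arg y b)].

Lemma rcons_arg_upd m k (y : arg m k) i a b :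
  rcons_arg (upd y i a) b = upd (rcons_arg y b) (lift ord_max i) a.
Proof.
apply/ffunP => j; rewrite !ffunE; case: unliftP => [j' ->|->].
  by rewrite (inj_eq lift_inj) ffunE.
by rewrite (negbTE (neq_lift _ _)).
Qed.

Lemma upd_rcons_arg_max m k (y : arg m k) b c :
  upd (rcons_arg y b) ord_max c = rcons_arg y c.
Proof.
apply/ffunP => j; rewrite !ffunE; case: unliftP => [j' ->|->].
  by rewrite eq_sym (negbTE (neq_lift _ _)).
by rewrite eqxx.
Qed.

Lemma rcons_arg_split m k (x : arg m.+1 k) :
  x = rcons_arg [ffun j => x (lift ord_max j)] (x ord_max).
Proof.
by apply/ffunP => j; rewrite !ffunE; case: unliftP => [j' ->|->] //; rewrite ffunE.
Qed.

Lemma layer_quasigroup m k (f : {ffun arg m.+1 k -> 'I_k}) b :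
  is_quasigroup f -> is_quasigroup (layer f b).
Proof.
move=> qf; apply/forallP => i; apply/forallP => x; apply/andP; split.
  apply/injectiveP => a1 a2; rewrite !ffunE !rcons_arg_upd.
  exact: quasigroup_line_inj qf.
apply/forallP => v.
have [a fa] := quasigroup_line_surj (lift ord_max i) (rcons_arg x b) v qf.
by apply/existsP; exists a; rewrite ffunE rcons_arg_upd fa.
Qed.

Lemma layer_line_inj m k (f : {ffun arg m.+1 k -> 'I_k}) y b c :
  is_quasigroup f -> layer f b y = layer f c y -> b = c.
Proof.
move=> qf; rewrite !ffunE -(upd_rcons_arg_max y b b) -(upd_rcons_arg_max y b c).
exact: quasigroup_line_inj qf.
Qed.

Lemma layer_line_surj m k (f : {ffun arg m.+1 k -> 'I_k}) y v :
  is_quasigroup f -> exists b, layer f b y = v.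
Proof.
move=> qf; case: k f y v qf => [|k] f y; first by case.
move=> v qf; have [b fb] := quasigroup_line_surj ord_max (rcons_arg y ord0) v qf.
by exists b; rewrite ffunE -(upd_rcons_arg_max y ord0 b).
Qed.

Lemma layer_inj m k (f g : {ffun arg m.+1 k -> 'I_k}) :
  (forall b, layer f b = layer g b) -> f = g.
Proof.
move=> fg; apply/ffunP => x; rewrite (rcons_arg_split x).
by move/ffunP: (fg (x ord_max)) => /(_ [ffun j => x (lift ord_max j)]); rewrite !ffunE.
Qed.

Lemma quasigroup_eq_off_layer m k (f g : {ffun arg m.+1 k -> 'I_k}) c :
  is_quasigroup f -> is_quasigroup g ->
  (forall b, b != c -> layer f b = layer g b) -> f = g.
Proof.
move=> qf qg fg; apply: layer_inj => b; have [-> | bc] := eqVneq b c; last exact: fg.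
apply/ffunP => y; have [b' gb'] := layer_line_surj y (layer f c y) qg.
have [eb | b'c] := eqVneq b' c; first by rewrite -gb' eb.
by move: gb'; rewrite -(fg _ b'c) => /(layer_line_inj qf)/eqP; rewrite (negbTE b'c).
Qed.

Section Switching.

Variables (m k : nat) (g0 h0 : {ffun arg m k -> 'I_k}).
Hypotheses (g0_quasigroup : is_quasigroup g0) (h0_quasigroup : is_quasigroup h0).
Hypothesis g0_neq_h0 : forall w, g0 w != h0 w.

(* Along a switching edge, a layer with values in {g0, h0} agrees with h0 at one end iff it does
   at the other end. *)
Definition switch_closed (S : {set arg m k}) : bool :=
  [forall y, forall i, forall a,
     (h0 y == g0 (upd y i a)) ==> ((y \in S) == (upd y i a \in S))].

Lemma switch_closedP (S : {set arg m k}) :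
  reflect (forall y i a, h0 y = g0 (upd y i a) -> (y \in S) = (upd y i a \in S))
          (switch_closed S).
Proof.
apply: (iffP forallP) => [hS y i a /eqP e | hS y].
  by move/forallP/(_ i)/forallP/(_ a)/implyP/(_ e)/eqP: (hS y).
by apply/forallP => i; apply/forallP => a; apply/implyP => /eqP/hS ->.
Qed.

Lemma switch_closedD (S T : {set arg m k}) :
  switch_closed S -> switch_closed T -> switch_closed (S :\: T).
Proof.
move=> /switch_closedP hS /switch_closedP hT; apply/switch_closedP => y i a e.
by rewrite !inE (hS _ _ _ e) (hT _ _ _ e).
Qed.

Lemma switch_closed_card (S : {set arg m k}) :
  switch_closed S -> S != set0 -> 2 ^ m <= #|S|.
Proof.
move=> /switch_closedP hS Sn0.
have := @neighbour_closed_card m k setT S Sn0; rewrite cardsT card_ord; apply=> y i yS _.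
have [a g0a] := quasigroup_line_surj i y (h0 y) g0_quasigroup.
exists a; last by rewrite -(hS y i a) ?g0a.
by apply: contraTneq (g0_neq_h0 y) => ea; rewrite -g0a ea upd_id eqxx.
Qed.

Lemma card_switch_closed : #|[set S | switch_closed S]| ^ (2 ^ m) <= 2 ^ (k ^ m).
Proof.
have -> : k ^ m = #|[set: arg m k]| by rewrite cardsT card_ffun !card_ord.
apply: diff_closed_family_card; last by rewrite powersetT subsetT.
- by move=> S T; rewrite !inE; exact: switch_closedD.
- by move=> S; rewrite inE; exact: switch_closed_card.
Qed.

Lemma switch_closed_agree (g : {ffun arg m k -> 'I_k}) :
  is_quasigroup g -> (forall w, g w = g0 w \/ g w = h0 w) ->
  switch_closed [set y | g y == h0 y].
Proof.
move=> qg gw; apply/switch_closedP => y i a e; rewrite !inE.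
have y_fixed := upd_id y i.
apply/eqP/eqP => [gy | gz].
  have [gz | //] := gw (upd y i a).
  have ea : a = y i.
    by apply: (quasigroup_line_inj (x := y) (i := i) qg); rewrite gz -e y_fixed gy.
  by move: (g0_neq_h0 y); rewrite e ea y_fixed eqxx.
have [gy | //] := gw y.
(* the point c where g takes the value h0 y on the line through y agrees with neither g0 nor h0 *)
have [c gc] := quasigroup_line_surj i y (h0 y) qg.
have [gw' | gw'] := gw (upd y i c).
  have ca : c = a.
    by apply: (quasigroup_line_inj (x := y) (i := i) g0_quasigroup); rewrite -gw' gc e.
  by move: (g0_neq_h0 (upd y i a)); rewrite -gz -ca -gw' eqxx.
have cy : c = y i.
  by apply: (quasigroup_line_inj (x := y) (i := i) h0_quasigroup); rewrite -gw' gc y_fixed.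
by move: (g0_neq_h0 y); rewrite -gy -[y in g y]y_fixed -cy gc eqxx.
Qed.

End Switching.

Section LastTwoLayers.

Variables m K : nat.

Definition low_layers (f : {ffun arg m.+1 K.+2 -> 'I_K.+2}) :
    {ffun 'I_K -> {ffun arg m K.+2 -> 'I_K.+2}} :=
  [ffun b => layer f (widen_ord (leqW (leqnSn K)) b)].

Definition low_layer_fiber t := [set f | is_quasigroup f & low_layers f == t].

Definition penult : 'I_K.+2 := inord K.

Lemma penult_neq_max : penult != ord_max.
Proof. by rewrite -val_eqE /= inordK // neq_ltn ltnSn. Qed.

Lemma top_two_cases (b : 'I_K.+2) : b < K \/ b = penult \/ b = ord_max.
Proof.
have [bK | Kb] := ltnP b K; [by left | right].
have [bK | bK] := eqVneq (b : nat) K; first by left; apply: val_inj; rewrite /= inordK.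
by right; apply: val_inj => /=; have := ltn_ord b; lia.
Qed.

Lemma low_layers_eq f f0 (b : 'I_K.+2) :
  low_layers f = low_layers f0 -> b < K -> layer f b = layer f0 b.
Proof.
move=> /ffunP e bK; move: (e (Ordinal bK)); rewrite !ffunE.
by have -> : widen_ord (leqW (leqnSn K)) (Ordinal bK) = b by apply: val_inj.
Qed.

Lemma top_layer_values f f0 y (b : 'I_K.+2) :
  is_quasigroup f -> is_quasigroup f0 -> low_layers f = low_layers f0 -> K <= b ->
  layer f b y = layer f0 penult y \/ layer f b y = layer f0 ord_max y.
Proof.
move=> qf qf0 e Kb; have [c f0c] := layer_line_surj y (layer f b y) qf0.
have [cK | [ec | ec]] := top_two_cases c; last 2 first.
- by left; rewrite -f0c ec.
- by right; rewrite -f0c ec.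
have ecb : c = b by apply: (layer_line_inj (y := y) qf); rewrite (low_layers_eq e cK).
by move: cK; rewrite ecb ltnNge Kb.
Qed.

Lemma card_low_layer_fiber t : #|low_layer_fiber t| ^ (2 ^ m) <= 2 ^ (K.+2 ^ m).
Proof.
have [-> | [f0]] := set_0Vmem (low_layer_fiber t); first by rewrite cards0 exp0n ?expn_gt0.
rewrite inE => /andP [qf0 /eqP f0t].
set g0 := layer f0 penult; set h0 := layer f0 ord_max.
have g0_neq_h0 w : g0 w != h0 w.
  by apply: contra penult_neq_max => /eqP/(layer_line_inj qf0)/eqP.
have fiber_values f w :
    f \in low_layer_fiber t -> layer f penult w = g0 w \/ layer f penult w = h0 w.
  rewrite inE => /andP [qf /eqP ft]; apply: top_layer_values => //; first by rewrite ft.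
  by rewrite /penult inordK.
pose S f := [set y | layer f penult y == h0 y].
apply: leq_trans (card_switch_closed (layer_quasigroup _ qf0) g0_neq_h0); apply: leq_exp2rW.
rewrite -(@card_in_imset _ _ S).
  apply/subset_leq_card/subsetP => _ /imsetP [f fS ->]; rewrite inE.
  apply: switch_closed_agree; rewrite ?layer_quasigroup //; last by move=> w; apply: fiber_values.
  by move: fS; rewrite inE => /andP [].
move=> f f' fS f'S eS.
move: (fS) (f'S); rewrite !inE => /andP [qf /eqP ft] /andP [qf' /eqP f't].
apply: (quasigroup_eq_off_layer (c := ord_max)) => // b.
have [bK | [-> | ->]] := top_two_cases b.
- by move=> _; apply: low_layers_eq bK; rewrite ft f't.
- move=> _; apply/ffunP => y; move/setP/(_ y): eS; rewrite !inE.
  by case: (fiber_values f y fS) => ->; case: (fiber_values f' y f'S) => ->;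
    rewrite ?eqxx ?(negbTE (g0_neq_h0 y)).
- by rewrite eqxx.
Qed.

End LastTwoLayers.

Lemma Q_succ_le m K :
  Q m.+1 K.+2 <= Q m K.+2 ^ K *
    \max_(t : {ffun 'I_K -> {ffun arg m K.+2 -> 'I_K.+2}}) #|low_layer_fiber t|.
Proof.
set W := \max_(t : {ffun 'I_K -> _}) _.
set QG := [set g : {ffun arg m K.+2 -> 'I_K.+2} | is_quasigroup g].
rewrite /Q -sum1_card (partition_big (@low_layers m K) (mem (ffun_on (mem QG)))); last first.
  by move=> f; rewrite inE => qf; apply/ffun_onP => b; rewrite ffunE inE layer_quasigroup.
apply: (@leq_trans (\sum_(t in ffun_on (mem QG)) W)).
  apply: leq_sum => t _; rewrite sum1dep_card; apply: leq_trans (leq_bigmax t).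
  by apply/eq_leq/eq_card => f; rewrite !inE.
by rewrite sum_nat_const card_ffun_on card_ord.
Qed.

Lemma Q1_le_fact k : Q 1 k <= k`!.
Proof.
pose const_arg (a : 'I_k) : arg 1 k := [ffun _ => a].
have const_argE (x : arg 1 k) : x = const_arg (x ord0).
  by apply/ffunP => j; rewrite ffunE (ord1 j).
have upd_const x a : upd x ord0 a = const_arg a by rewrite [LHS]const_argE upd_eq.
rewrite -ffactnn -{2 3}(card_ord k) -card_inj_ffuns /Q.
rewrite -(@card_in_imset _ _ (fun f : {ffun arg 1 k -> 'I_k} => [ffun a => f (const_arg a)])).
  apply/subset_leq_card/subsetP => _ /imsetP [f + ->]; rewrite inE => qf; rewrite inE.
  apply/injectiveP => a b; rewrite !ffunE => fab.
  by apply: (quasigroup_line_inj (i := ord0) (x := const_arg a) qf); rewrite !upd_const.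
move=> f f' _ _ /ffunP ff'; apply/ffunP => x.
by move: (ff' (x ord0)); rewrite !ffunE -const_argE.
Qed.

Local Open Scope R_scope.

Lemma INR_expn m n : INR (m ^ n)%N = INR m ^ n.
Proof. by rewrite -pow_INR; congr INR; elim: n => // n IH; rewrite expnS IH. Qed.

Lemma Rpower2_log2 x : 0 < x -> Rpower 2 (log2 x) = x.
Proof. by move=> x_gt0; apply: Rpower_Rlog => //; lra. Qed.

Lemma INR_le_Rpower2 (W N E : nat) :
  (0 < N)%N -> (W ^ N <= 2 ^ E)%N -> INR W <= Rpower 2 (INR E / INR N).
Proof.
move=> N_gt0 WN_le; have [-> | W_gt0] := posnP W; first by left; apply: exp_pos.
have N_pos : 0 < INR N by apply: lt_0_INR; apply/ltP.
have W_pos : 0 < INR W by apply: lt_0_INR; apply/ltP.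
have root_pow a : 0 < a -> Rpower (a ^ N) (/ INR N) = a.
  by move=> a_pos; rewrite -Rpower_pow // Rpower_mult Rinv_r ?Rpower_1 //; lra.
have -> : Rpower 2 (INR E / INR N) = Rpower (2 ^ E) (/ INR N).
  by rewrite -Rpower_pow ?Rpower_mult //; lra.
rewrite -(root_pow (INR W)) //; apply: Rle_Rpower_l; first by left; apply: Rinv_0_lt_compat.
split; first exact: pow_lt.
by rewrite -[2]/(INR 2) -!INR_expn; apply: le_INR; apply/leP.
Qed.

Lemma INR_add2 n : INR n.+2 = INR n + 2.
Proof. by rewrite !S_INR; ring. Qed.

Lemma Q_succ_Rpower_le m K x :
  INR (Q m K.+2) <= Rpower 2 x ->
  INR (Q m.+1 K.+2) <= Rpower 2 (INR K * x + ((INR K + 2) / 2) ^ m).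
Proof.
move=> Q_le; apply: Rle_trans (le_INR _ _ (leP (Q_succ_le m K))) _.
set W := \max_(t : {ffun 'I_K -> {ffun arg m K.+2 -> 'I_K.+2}}) _.
have W_le : (W ^ (2 ^ m) <= 2 ^ (K.+2 ^ m))%N.
  apply: (big_ind (fun w => w ^ (2 ^ m) <= 2 ^ (K.+2 ^ m))%N) => [|w w' w_le w'_le|t _].
  - by rewrite exp0n ?expn_gt0.
  - by rewrite /maxn; case: ltnP.
  - exact: card_low_layer_fiber.
have := INR_le_Rpower2 (expn_gt0 2 m) W_le.
rewrite !INR_expn INR_add2 /Rdiv -pow_inv -Rpow_mult_distr -[INR 2]/2 => W_Rle.
rewrite -multE mult_INR INR_expn Rpower_plus.
have -> : Rpower 2 (INR K * x) = Rpower 2 x ^ K.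
  by rewrite -Rpower_pow ?Rpower_mult ?(Rmult_comm x) //; apply: exp_pos.
apply: Rmult_le_compat => //; [exact/pow_le/pos_INR | exact: pos_INR |].
by apply: pow_incr; split=> //; apply: pos_INR.
Qed.

(* Closed form of the recurrence L' = K L + r^(j+1) with r = (K+2)/2: the constant
   c = (K+2)/(K-2) solves c (K - r) = r. *)
Lemma Q_Rpower_le K j : (2 < K)%N ->
  INR (Q j.+1 K.+2) <=
  Rpower 2 (INR K ^ j * (log2 (INR K.+2`!) + (INR K + 2) / (INR K - 2))
            - (INR K + 2) / (INR K - 2) * ((INR K + 2) / 2) ^ j).
Proof.
move=> /ltP/lt_INR K_gt2; rewrite [INR 2]/= in K_gt2.
elim: j => [|j IH].
  rewrite !pow_O Rmult_1_l Rmult_1_r /Rminus Rplus_assoc Rplus_opp_r Rplus_0_r.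
  rewrite Rpower2_log2; first exact/le_INR/leP/Q1_le_fact.
  by apply: lt_0_INR; apply/ltP; apply: fact_gt0.
apply: Rle_trans (Q_succ_Rpower_le IH) _; apply: Rle_Rpower; first lra.
by right; rewrite -!tech_pow_Rmult; field; lra.
Qed.

Theorem theorem1 (k n : nat) (hk : (5 <= k)%nat) (hn : (2 <= n)%nat) :
  (INR (Q n k) <= Rpower 2 (c_const k * (INR k - 2) ^ n))%R.
Proof.
case: k hk => [|[|K]] // hk; case: n hn => [|j] // _.
have K_gt2 : (2 < K)%N by [].
have K_ge3 : 3 <= INR K by have := le_INR 3 K (leP K_gt2); rewrite [INR 3]/=; lra.
apply: Rle_trans (Q_Rpower_le j K_gt2) _; apply: Rle_Rpower; first lra.
rewrite /c_const INR_add2 (_ : INR K + 2 - 2 = INR K); last ring.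
set A := log2 _; set c := (INR K + 2) / (INR K - 2); set r := (INR K + 2) / 2.
have c_pos : 0 < c by apply: Rdiv_lt_0_compat; lra.
have -> : (A / INR K + (INR K + 2) / (INR K + 2 - 4)) * INR K ^ j.+1 =
          INR K ^ j * (A + c) + c * ((INR K - 1) * INR K ^ j).
  by rewrite -tech_pow_Rmult /c; field; lra.
have Kj_ge0 : 0 <= INR K ^ j by apply: pow_le; lra.
have : 0 <= c * ((INR K - 1) * INR K ^ j) by apply/Rmult_le_pos/Rmult_le_pos; lra.
have : 0 <= c * r ^ j by apply/Rmult_le_pos/pow_le; rewrite /r; lra.
lra.
Qed.
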